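(* For all integers $t$ and $\Delta$, the class of finite graphs of treewidth at most $t$ and maximum degree at most $\Delta$ has asymptotic dimension at most $1$.
   Context: Graphs are metric spaces with the shortest-path distance. Treewidth is the minimum width of a tree-decomposition (width being the maximum bag size minus one). For a metric space $(X,d)$, a family $\mathcal U$ of subsets is $D$-bounded if every member has diameter at most $D$, and $r$-disjoint if points in different members are at distance $>r$. A function $D:\mathbb{R}^+\to\mathbb{R}^+$ is an $n$-dimensional control function for $X$ if for every $r>0$ there is a cover $\mathcal U=\mathcal U_1\cup\dots\cup\mathcal U_{n+1}$ of $X$ with each $\mathcal U_i$ $r$-disjoint and each member $D(r)$-bounded; a class has asymptotic dimension at most $n$ if one such function works for all its members. *)

From mathcomp Require Import all_boot.
From Stdlib Require Import Reals ZArith.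
Set Implicit Arguments. Unset Strict Implicit. Unset Printing Implicit Defensive.

Definition simple_graph (T : finType) (e : rel T) : Prop :=
  symmetric e /\ irreflexive e.

(* Shortest-path distance: dist(x,y) <= d  iff there is a walk from x to y
   of length n with n <= d (the minimum of the lengths is attained, so this
   is exactly "the shortest-path distance is at most d"; the distance is
   +infinity when no walk exists). *)
Definition dist_le (T : finType) (e : rel T) (x y : T) (d : R) : Prop :=
  exists p : seq T, path e x p /\ last x p = y /\ (INR (size p) <= d)%R.

Definition bounded_family (T : finType) (e : rel T) (D : R)
  (U : {set {set T}}) : Prop :=
  forall A, A \in U -> forall x y, x \in A -> y \in A -> dist_le e x y D.

Definition disjoint_family (T : finType) (e : rel T) (r : R)
  (U : {set {set T}}) : Prop :=
  forall A B, A \in U -> B \in U -> A != B ->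
  forall x y, x \in A -> y \in B -> ~ dist_le e x y r.

Definition control_function (n : nat) (D : R -> R) (T : finType) (e : rel T)
  : Prop :=
  forall r : R, (0 < r)%R ->
  exists U : 'I_n.+1 -> {set {set T}},
    (forall x : T, exists i, exists2 A, A \in U i & x \in A) /\
    (forall i, disjoint_family e r (U i)) /\
    (forall i, bounded_family e (D r) (U i)).

Definition asdim_le (C : forall T : finType, rel T -> Prop) (n : nat) : Prop :=
  exists D : R -> R, (forall r, (0 < r)%R -> (0 < D r)%R) /\
    forall (T : finType) (e : rel T), C T e -> control_function n D e.

Definition is_tree (I : finType) (te : rel I) : Prop :=
  simple_graph te /\ (0 < #|I|) /\
  (forall i j, connect te i j) /\
  (* no cycle x, p_1, ..., p_k (k >= 2) with x adjacent to p_k *)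
  (forall (x : I) (p : seq I),
      path te x p -> uniq (x :: p) -> 2 <= size p -> ~~ te (last x p) x).

Definition tree_decomposition (T : finType) (e : rel T)
  (I : finType) (te : rel I) (bag : I -> {set T}) : Prop :=
  is_tree te /\
  (forall v : T, exists i, v \in bag i) /\
  (forall u v : T, e u v -> exists i, (u \in bag i) && (v \in bag i)) /\
  (forall (v : T) (i j : I), v \in bag i -> v \in bag j ->
     connect [rel a b | [&& te a b, v \in bag a & v \in bag b]] i j).

Definition treewidth_le (T : finType) (e : rel T) (t : Z) : Prop :=
  exists (I : finType) (te : rel I) (bag : I -> {set T}),
    tree_decomposition e te bag /\
    forall i, (Z.of_nat #|bag i| - 1 <= t)%Z.

Definition maxdeg_le (T : finType) (e : rel T) (Delta : Z) : Prop :=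
  forall x : T, (Z.of_nat #|[set y | e x y]| <= Delta)%Z.

(* Fix r > 0 and an integer n >= r.  Blowing every bag of a width-t tree-decomposition
   of G up to the n-balls around its vertices gives a tree-decomposition of the power
   graph G^n (x ~ y iff d(x, y) <= n) with bags of size O(t Delta^n), and G^n has
   degree at most (Delta + 1)^n.  A graph with bags of size <= K and degree <= d has a
   2-colouring whose monochromatic components have bounded size: precolour a small set
   A, add a vertex w, and remove a separator X found along the tree so that every
   component meets A + w in at most tau = 2dK vertices while |X| <= K |A + w| / tau;
   give A, w and X one colour and recurse on each remaining component, precolouring
   its boundary (of size <= d (|X| + tau) by the degree bound) with the other colour.
   For such a colouring of G^n, monochromatic components of the same colour are at
   distance > n >= r in G, and one of size c has diameter at most n c in G. *)
From Stdlib Require Import Reals ZArith Lia Lra.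
From mathcomp Require Import all_boot zify.
Set Implicit Arguments. Unset Strict Implicit. Unset Printing Implicit Defensive.

Lemma connect_sub_on (T : finType) (e1 e2 : rel T) (P : pred T) x y :
  P x -> (forall u v, P u -> e1 u v -> P v /\ e2 u v) ->
  connect e1 x y -> P y /\ connect e2 x y.
Proof.
move=> Px He /connectP [p]; elim: p x Px => [|z p IHp] x Px /=.
  by move=> _ ->; split; [|exact: connect0].
case/andP=> e1xz pz lp; have [Pz e2xz] := He _ _ Px e1xz.
have [Py e2zy] := IHp z Pz pz lp.
by split=> //; exact: connect_trans (connect1 e2xz) e2zy.
Qed.

Lemma card_bigcup_le (I T : finType) (S : {set I}) (f : I -> {set T}) c :
  (forall i, i \in S -> #|f i| <= c) -> #|\bigcup_(i in S) f i| <= #|S| * c.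
Proof.
move=> fc; apply: (@leq_trans (\sum_(i in S) #|f i|)); last first.
  by rewrite -sum_nat_const; exact: leq_sum.
apply: (big_ind2 (fun (A : {set T}) n => #|A| <= n)) => // [|A m B n Am Bn].
  by rewrite cards0.
have [AB _] := leq_card_setU A B; apply: leq_trans AB _; exact: leq_add.
Qed.

Section Components.
Variables (T : finType) (h : rel T).

Definition induced (S : {set T}) : rel T := [rel u v | [&& u \in S, v \in S & h u v]].
Definition comp (S : {set T}) (x : T) : {set T} := [set y | connect (induced S) x y].
Definition nbhd (S : {set T}) : {set T} := \bigcup_(u in S) [set v | h u v].

Lemma comp_refl (S : {set T}) x : x \in comp S x.
Proof. by rewrite inE connect0. Qed.

Lemma comp_closed (S P : {set T}) x : x \in P ->
  (forall u v, u \in P -> induced S u v -> v \in P) -> comp S x \subset P.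
Proof.
move=> xP closedP; apply/subsetP => y; rewrite inE => cxy.
have [] // := connect_sub_on (e2 := induced S) xP _ cxy.
by move=> u v uP huv; split; [exact: closedP huv|].
Qed.

Lemma comp_sub (S : {set T}) x : x \in S -> comp S x \subset S.
Proof. by move=> xS; apply: comp_closed => // u v _ /and3P[]. Qed.

Lemma comp_step (S : {set T}) x u v :
  u \in comp S x -> induced S u v -> v \in comp S x.
Proof. by rewrite !inE => cxu /connect1; exact: connect_trans. Qed.

Lemma nbhdP (S : {set T}) v : reflect (exists2 u, u \in S & h u v) (v \in nbhd S).
Proof.
apply: (iffP bigcupP) => [[u uS]|[u uS huv]]; first by rewrite inE; exists u.
by exists u; rewrite ?inE.
Qed.

Lemma card_nbhd d (S : {set T}) :
  (forall u, #|[set v | h u v]| <= d) -> #|nbhd S| <= #|S| * d.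
Proof. by move=> hd; apply: card_bigcup_le. Qed.

Hypothesis h_sym : symmetric h.

Lemma induced_sym (S : {set T}) : symmetric (induced S).
Proof. by move=> u v; rewrite /induced /= h_sym andbCA. Qed.

Lemma comp_eq (S : {set T}) x y : y \in comp S x -> comp S y = comp S x.
Proof.
rewrite inE => cxy; apply/setP => z; rewrite !inE; apply/idP/idP.
  exact: connect_trans.
by apply: connect_trans; rewrite (sym_connect_sym (@induced_sym S)).
Qed.

End Components.

Lemma sub_comp (T : finType) (h h' : rel T) (S S' : {set T}) x :
  (forall u v, u \in comp h S x -> induced h S u v -> induced h' S' u v) ->
  comp h S x \subset comp h' S' x.
Proof.
move=> sub_edges; apply/subsetP => y; rewrite [y \in comp h S x]inE => cxy.
have [] // := connect_sub_on (P := mem (comp h S x)) (e2 := induced h' S')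
  (comp_refl h S x) _ cxy.
  by move=> u v uC huv; split; [exact: comp_step huv | exact: sub_edges huv].
by move=> _; rewrite inE.
Qed.

Section Branches.
Variables (I : finType) (te : rel I).
Hypothesis te_tree : is_tree te.

Definition avoid (i : I) : rel I := [rel a b | [&& te a b, a != i & b != i]].
Definition branch (i j : I) : {set I} := [set l | connect (avoid i) j l].

Lemma tree_sym : symmetric te. Proof. by case: te_tree => [[]]. Qed.
Lemma tree_irr : irreflexive te. Proof. by case: te_tree => [[]]. Qed.

Lemma tree_neq i j : te i j -> i != j.
Proof. by apply: contraTneq => ->; rewrite tree_irr. Qed.

Lemma avoid_sym i : symmetric (avoid i).
Proof. by move=> a b; rewrite /avoid /= tree_sym; case: (a != i); rewrite ?andbF ?andbT. Qed.

Lemma branch_connect i j x y :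
  connect (avoid i) x y -> x \in branch i j -> y \in branch i j.
Proof. by rewrite !inE => cxy cjx; exact: connect_trans cjx cxy. Qed.

Lemma branch_disjoint i j l : te i j -> l \in branch i j -> l \notin branch j i.
Proof.
move=> tij; rewrite !inE => cjl; apply/negP => cjil.
pose e := [rel a b | [&& te a b, ~~ ((a == i) && (b == j)) & ~~ ((a == j) && (b == i))]].
have avoid_e k : k = i \/ k = j -> subrel (avoid k) (connect e).
  case=> -> a b /and3P[tab /negbTE ak /negbTE bk]; apply: connect1;
    by rewrite /= tab ak bk !andbF.
have cli : connect (avoid j) l i by move: cjil; rewrite (sym_connect_sym (@avoid_sym j)).
(* A walk from j to i avoiding the edge ij would close a cycle with it. *)
have /connectP[p pp lp] : connect e j i.
  exact: connect_trans (connect_sub (avoid_e i (or_introl erefl)) cjl)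
                       (connect_sub (avoid_e j (or_intror erefl)) cli).
move: lp; case: (shortenP pp) => -[|a [|b q]] pp' up' _ /= lp.
- by move: (tree_neq tij); rewrite lp eqxx.
- by move: pp'; rewrite /= -lp !eqxx !andbF.
- case: te_tree => _ [_ [_ acyclic]].
  have pte : path te j [:: a, b & q] by apply: sub_path pp' => ? ? /andP[].
  by have := acyclic j _ pte up' isT; rewrite /= -lp tij.
Qed.

Lemma branch_cover j m : m != j -> exists2 l, te j l & m \in branch j l.
Proof.
move=> mj; case: te_tree => _ [_ [conn _]].
have /connectP[p pp lp] := conn j m; move: lp; case: (shortenP pp) => -[|l q] /=.
  by move=> _ _ _ mj'; rewrite mj' eqxx in mj.
case/andP=> tjl pq; rewrite inE negb_or => /andP[/andP[jl jq] _] _ mq.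
exists l => //; rewrite inE; apply/connectP; exists q => //.
apply: (sub_in_path (P := predC1 j)) pq => [a b|]; first by rewrite !inE /avoid /= => -> -> ->.
by rewrite /= eq_sym jl; apply/allP => z zq /=; apply: contraNneq jq => <-.
Qed.

Lemma notin_branch j l : l != j -> j \notin branch j l.
Proof.
move=> lj; rewrite inE; apply/negP => /connectP[q].
case/lastP: q => [_ jl|q y]; first by rewrite jl eqxx in lj.
by rewrite rcons_path last_rcons => /andP[_ /and3P[_ _ yj]] jy; rewrite jy eqxx in yj.
Qed.

Lemma branch_proper i j l :
  te i j -> te j l -> l != i -> branch j l \proper branch i j.
Proof.
move=> tij tjl li; have ji : j != i by rewrite eq_sym (tree_neq tij).
have avoid_jl : avoid i j l by rewrite /avoid /= tjl ji li.
apply/properP; split; last first.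
  by exists j; [rewrite inE connect0 | apply: notin_branch; rewrite eq_sym (tree_neq tjl)].
apply/subsetP => x; rewrite inE => /connectP[q pq ->].
have iq : i \notin l :: q.
  apply/negP => /(path_connect pq) cli; apply: (negP (branch_disjoint tij _)).
    by rewrite inE; exact: connect1 avoid_jl.
  by rewrite inE (sym_connect_sym (@avoid_sym j)).
rewrite inE; apply: connect_trans (connect1 avoid_jl) _; apply/connectP; exists q => //.
apply: (sub_in_path (P := predC1 i)) pq => [a b|].
  by rewrite !inE /avoid /= => -> -> /and3P[-> _ _].
by apply/allP => z zq /=; apply: contraNneq iq => <-.
Qed.

End Branches.

Section TreeDecomposition.
Variables (T : finType) (h : rel T) (I : finType) (te : rel I) (bag : I -> {set T}).
Hypothesis td : tree_decomposition h te bag.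

Definition verts (S : {set I}) : {set T} := \bigcup_(a in S) bag a.

Lemma td_tree : is_tree te. Proof. by case: td. Qed.

Lemma connect_avoid_bags j x a b :
  x \notin bag j -> x \in bag a -> x \in bag b -> connect (avoid te j) a b.
Proof.
move=> xj xa xb; case: td => _ [_ [_ bags_conn]].
apply: connect_sub (bags_conn x a b xa xb) => u v /and3P[tuv xu xv]; apply: connect1.
by rewrite /avoid /= tuv /=; apply/andP; split; apply: contraNneq xj => <-.
Qed.

Lemma verts_branch_connect j l x a :
  x \notin bag j -> x \in bag a -> x \in verts (branch te j l) -> a \in branch te j l.
Proof.
move=> xj xa /bigcupP[b bB xb].
exact: branch_connect (connect_avoid_bags xj xb xa) bB.
Qed.

Lemma verts_branch_disjoint i j x : te i j -> x \notin bag j ->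
  x \in verts (branch te j i) -> x \notin verts (branch te i j).
Proof.
move=> tij xj xji; apply/bigcupP => -[b bij xb].
by have := branch_disjoint td_tree tij bij; rewrite (verts_branch_connect xj xb xji).
Qed.

Lemma comp_in_branch (S : {set T}) j x : [disjoint S & bag j] -> x \in S ->
  exists2 l, te j l & comp h S x \subset verts (branch te j l).
Proof.
move=> Sj xS; case: td => _ [cover [edges _]].
have [m xm] := cover x.
have mj : m != j by apply: contraTneq xm => ->; rewrite (disjointFr Sj xS).
have [l tjl ml] := branch_cover td_tree mj.
exists l => //; apply: comp_closed => [|u v uB /and3P[uS vS huv]].
  by apply/bigcupP; exists m.
have [c /andP[uc vc]] := edges u v huv.
apply/bigcupP; exists c => //.
exact: verts_branch_connect (negbT (disjointFr Sj uS)) uc uB.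
Qed.

End TreeDecomposition.

Section Separator.
Variables (T : finType) (h : rel T) (I : finType) (te : rel I) (bag : I -> {set T}).
Hypothesis td : tree_decomposition h te bag.
Variables (K tau : nat).
Hypothesis bag_le : forall i, #|bag i| <= K.

Definition balanced_separator (A W X : {set T}) : Prop :=
  [/\ X \subset W, tau * #|X| <= K * #|A| &
      forall x, x \in W :\: X -> #|A :&: comp h (W :\: X) x| <= tau].

Lemma disjoint_bag_diff j (W X : {set T}) :
  bag j :&: W \subset X -> [disjoint W :\: X & bag j].
Proof.
move=> sX; rewrite -setI_eq0; apply/eqP/setP => x; rewrite !inE.
by apply/negP => /andP[/andP[/negP xX xW] xj]; apply: xX; apply: (subsetP sX); rewrite inE xj.
Qed.

Lemma balanced_separator0 (A W : {set T}) : #|A| <= tau -> balanced_separator A W set0.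
Proof.
move=> Atau; split=> [||x _]; rewrite ?sub0set ?cards0 ?muln0 //.
exact: leq_trans (subset_leq_card (subsetIl _ _)) Atau.
Qed.

Lemma balanced_separator_bag j (A W : {set T}) : tau <= #|A| ->
  (forall l, te j l -> #|A :&: verts bag (branch te j l)| <= tau) ->
  balanced_separator A W (bag j :&: W).
Proof.
move=> tauA light; split=> [|| x xWX]; first exact: subsetIr.
  by have := bag_le j; have := subset_leq_card (subsetIl (bag j) W); nia.
have [l tjl sub] := comp_in_branch td (disjoint_bag_diff (subxx _)) xWX.
by apply: leq_trans (light l tjl); apply/subset_leq_card/setIS.
Qed.

Lemma balanced_separator_split i j (A W X : {set T}) : te i j ->
  tau < #|A :&: verts bag (branch te i j)| ->
  (forall l, te j l -> l != i -> #|A :&: verts bag (branch te j l)| <= tau) ->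
  balanced_separator (A :\: verts bag (branch te i j))
                     ((W :&: verts bag (branch te j i)) :\: bag j) X ->
  balanced_separator A W ((bag j :&: W) :|: X).
Proof.
set Bij := verts bag (branch te i j); set W' := (W :&: _) :\: bag j.
move=> tij heavy light [XW' costX sepX]; set Y := _ :|: X.
have W'W : W' \subset W by apply/subsetP => x; rewrite !inE => /and3P[_ ->].
split=> [|| x xWY].
- by rewrite subUset subsetIr (subset_trans XW' W'W).
- have := cardsD A Bij; have := subset_leq_card (subsetIl A Bij).
  have := subset_leq_card (subsetIl (bag j) W); have := bag_le j.
  have [+ _] := leq_card_setU (bag j :&: W) X; rewrite -/Y; nia.
have [l tjl sub] := comp_in_branch td (disjoint_bag_diff (subsetUl _ X)) xWY.
have [eli|li] := eqVneq l i; last first.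
  by apply: leq_trans (light l tjl li); apply/subset_leq_card/setIS.
rewrite {l tjl}eli in sub.
have inW' y : y \in comp h (W :\: Y) x -> y \in W' :\: X.
  move=> yC; have /subsetP/(_ y yC) := comp_sub h xWY; have /subsetP/(_ y yC) := sub.
  rewrite !inE negb_or negb_and => yB /andP[/andP[yjW ->] yW]; rewrite yW yB andbT.
  by rewrite yW orbF in yjW; rewrite yjW.
have subC : comp h (W :\: Y) x \subset comp h (W' :\: X) x.
  apply: sub_comp => u v uC uv; have vC := comp_step uC uv.
  by move: uv => /and3P[_ _ huv]; rewrite /induced /= (inW' u uC) (inW' v vC).
apply: leq_trans (sepX x (inW' x (comp_refl h _ x))); apply: subset_leq_card.
apply/subsetP => y; rewrite inE => /andP[yA yC].
rewrite inE (subsetP subC y yC) !inE yA !andbT.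
have := inW' y yC; rewrite !inE => /andP[_ /and3P[yj _ yji]].
by apply: (verts_branch_disjoint td tij yj).
Qed.

Lemma balanced_separator_exists (A W : {set T}) : exists X, balanced_separator A W X.
Proof.
have [N AN] := ubnP #|A|; elim: N A W AN => // N IH A W; rewrite ltnS => AN.
have [Atau|tauA] := leqP #|A| tau; first by exists set0; exact: balanced_separator0.
pose heavy (p : I * I) := te p.1 p.2 && (tau < #|A :&: verts bag (branch te p.1 p.2)|).
case: (pickP heavy) => [p0 heavy_p0|light]; last first.
  have [j0 _] : exists j0 : I, true.
    by case: (td_tree td) => _ [/card_gt0P[j0 _] _]; exists j0.
  exists (bag j0 :&: W); apply: balanced_separator_bag (ltnW tauA) _ => l tjl.
  by have := light (j0, l); rewrite /heavy /= tjl /= => /negbT; rewrite -leqNgt.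
(* Minimality of the branch makes every other branch at j light (branch_proper). *)
case: (arg_minnP (fun p : I * I => #|branch te p.1 p.2|) heavy_p0).
move=> -[i j] /andP[tij hij] minij; rewrite /= in tij hij minij.
have [|X sepX] := IH (A :\: verts bag (branch te i j))
                     ((W :&: verts bag (branch te j i)) :\: bag j).
  by rewrite cardsD; lia.
exists (bag j :&: W :|: X); apply: (balanced_separator_split tij hij _ sepX) => l tjl li.
rewrite leqNgt; apply/negP => hjl; have := minij (j, l); rewrite /heavy /= tjl hjl => /(_ isT).
by have := proper_card (branch_proper (td_tree td) tij tjl li); lia.
Qed.

End Separator.

Definition mono (T : finType) (h : rel T) (col : T -> bool) : rel T :=
  [rel u v | h u v && (col u == col v)].

Lemma mono_sym (T : finType) (h : rel T) col : symmetric h -> symmetric (mono h col).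
Proof. by move=> h_sym u v; rewrite /mono /= h_sym eq_sym. Qed.

Section Glue.
Variables (T : finType) (h : rel T).
Hypothesis h_sym : symmetric h.
Variables (W R : {set T}) (b : bool) (F : {set T} -> T -> bool).
Hypothesis F_boundary : forall y, y \in W :\: R ->
  forall a, a \in comp h (W :\: R) y :&: nbhd h R -> F (comp h (W :\: R) y) a = ~~ b.

Definition glued (z : T) : bool := if z \in R then b else F (comp h (W :\: R) z) z.

Lemma glued_boundary u v : u \in R -> v \in W :\: R -> h u v -> glued v = ~~ b.
Proof.
move=> uR vWR huv; have vR : v \notin R by case/setDP: vWR.
rewrite /glued (negbTE vR); apply: (F_boundary vWR).
by rewrite inE comp_refl; apply/nbhdP; exists u.
Qed.

Lemma glued_comp_in x : x \in R -> comp (mono h glued) W x \subset R.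
Proof.
move=> xR; apply: comp_closed => // u v uR /and3P[_ vW /andP[huv /eqP cuv]].
apply: contraT => vR; have := glued_boundary uR _ huv; rewrite inE vR vW => /(_ isT).
by rewrite -cuv /glued uR; case: b.
Qed.

Lemma glued_comp_out x : x \in W :\: R ->
  comp (mono h glued) W x \subset comp (mono h (F (comp h (W :\: R) x))) (comp h (W :\: R) x) x.
Proof.
move=> xWR; set C := comp h (W :\: R) x.
have glued_C u : u \in C -> glued u = F C u.
  move=> uC; have /setDP[_ uR] := subsetP (comp_sub h xWR) u uC.
  by rewrite /glued (negbTE uR) (comp_eq h_sym uC).
have sub_C : comp (mono h glued) W x \subset C.
  apply: comp_closed => [|u v uC /and3P[_ vW /andP[huv /eqP cuv]]]; first exact: comp_refl.
  have /setDP[uW uR] := subsetP (comp_sub h xWR) u uC.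
  have vR : v \notin R.
    apply: contraT => /negbNE vR; have uWR : u \in W :\: R by rewrite inE uR uW.
    by have := glued_boundary vR uWR; rewrite h_sym huv cuv /glued vR => /(_ isT); case: b.
  by apply: comp_step uC _; rewrite /induced /= huv !inE uR vR uW vW.
apply: sub_comp => u v uG uv; have vG := comp_step uG uv.
move: uv => /and3P[_ _ /andP[huv cuv]].
have [uC vC] := (subsetP sub_C u uG, subsetP sub_C v vG).
by rewrite /induced /mono /= uC vC huv -(glued_C u uC) -(glued_C v vC).
Qed.

End Glue.

Section ClusteredColoring.
Variables (T : finType) (h : rel T) (I : finType) (te : rel I) (bag : I -> {set T}).
Hypotheses (h_sym : symmetric h) (td : tree_decomposition h te bag).
Variables (K d : nat).
Hypotheses (K_gt0 : 0 < K) (bag_le : forall i, #|bag i| <= K).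
Hypotheses (d_gt0 : 0 < d) (deg_le : forall x, #|[set y | h x y]| <= d).

(* A component boundary has at most d (|X| + 2 d K) <= precolored_bound vertices. *)
Definition precolored_bound := 4 * d * d * K + 1.
Definition cluster_bound := 2 * precolored_bound + 2.

Lemma separator_card (W P X : {set T}) : #|P| <= precolored_bound + 1 ->
  balanced_separator h K (2 * d * K) P W X -> 2 * d * #|X| <= precolored_bound + 1.
Proof.
move=> Ps [_ costX _]; rewrite -(leq_pmul2l K_gt0).
by have := leq_mul (leqnn K) Ps; nia.
Qed.

Lemma boundary_card (W P X : {set T}) y : P \subset W -> #|P| <= precolored_bound + 1 ->
  balanced_separator h K (2 * d * K) P W X -> y \in W :\: (P :|: X) ->
  #|comp h (W :\: (P :|: X)) y :&: nbhd h (P :|: X)| <= precolored_bound.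
Proof.
move=> PW Ps sep yWR; have cardX := separator_card Ps sep.
have [_ _ sepX] := sep; set C := comp h _ y.
have yWX : y \in W :\: X by move: yWR; rewrite !inE negb_or => /andP[/andP[_ ->] ->].
have C_WX : C \subset comp h (W :\: X) y.
  apply: sub_comp => a c _ /and3P[aW cW hac]; rewrite /induced /= hac andbT.
  by move: aW cW; rewrite !inE !negb_or => /andP[/andP[_ ->] ->] /andP[/andP[_ ->] ->].
(* A neighbour in P of a vertex of C lies in the component of y in W minus X. *)
have sub : C :&: nbhd h (P :|: X) \subset nbhd h (X :|: (P :&: comp h (W :\: X) y)).
  apply/subsetP => z /setIP[/(subsetP C_WX) zC /nbhdP[u uR huz]]; apply/nbhdP; exists u => //.
  rewrite inE; case: (boolP (u \in X)) => //= uX.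
  have uP : u \in P by move: uR; rewrite inE (negbTE uX) orbF.
  have zWX := subsetP (comp_sub h yWX) z zC.
  rewrite inE uP /=; apply: (comp_step zC).
  by rewrite /induced /= h_sym huz zWX inE uX (subsetP PW u uP).
apply: leq_trans (subset_leq_card sub) _; apply: leq_trans (card_nbhd _ deg_le) _.
have [+ _] := leq_card_setU X (P :&: comp h (W :\: X) y); have := sepX y yWX.
rewrite /precolored_bound in cardX *; nia.
Qed.

Lemma clustered_coloring (W A : {set T}) (b : bool) :
  A \subset W -> #|A| <= precolored_bound ->
  exists col : T -> bool, {in A, forall a, col a = b} /\
    forall x, x \in W -> #|comp (mono h col) W x| <= cluster_bound.
Proof.
have [N WN] := ubnP #|W|; elim: N W A b WN => // N IH W A b; rewrite ltnS => WN AW As.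
have [-> | [w0 w0W]] := set_0Vmem W; first by exists (fun=> b); split=> // x; rewrite inE.
set P := w0 |: A; have PW : P \subset W by rewrite subUset sub1set w0W AW.
have Ps : #|P| <= precolored_bound + 1 by rewrite cardsU1 addnC leq_add // leq_b1.
have [X sepX] := balanced_separator_exists td (2 * d * K) bag_le P W.
set R := P :|: X.
have Rw : #|R| <= cluster_bound.
  have [+ _] := leq_card_setU P X; have := separator_card Ps sepX.
  by rewrite /R /cluster_bound; nia.
(* Precolouring each component's boundary with ~~ b keeps monochromatic components
   from crossing into R. *)
have /fin_all_exists[F HF] : forall C : {set T}, exists col : T -> bool,
    [exists y in W :\: R, C == comp h (W :\: R) y] ->
    {in C :&: nbhd h R, forall a, col a = ~~ b} /\
    forall z, z \in C -> #|comp (mono h col) C z| <= cluster_bound.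
  move=> C; case: (boolP [exists y in _, _]) => [/exists_inP[y yWR /eqP->]|_];
    last by exists (fun=> b).
  have CW : comp h (W :\: R) y \proper W.
    apply/properP; split; first exact: subset_trans (comp_sub h yWR) (subsetDl W R).
    by exists w0 => //; apply/negP => /(subsetP (comp_sub h yWR))/setDP[_]; rewrite !inE eqxx.
  have [col [col_b col_w]] := IH _ (comp h (W :\: R) y :&: nbhd h R) (~~ b)
    (leq_trans (proper_card CW) WN) (subsetIl _ _) (boundary_card PW Ps sepX yWR).
  by exists col.
have F_boundary y : y \in W :\: R -> forall a, a \in comp h (W :\: R) y :&: nbhd h R ->
    F (comp h (W :\: R) y) a = ~~ b.
  by move=> yWR; apply: (HF _ _).1; apply/exists_inP; exists y.
exists (glued h W R b F); split=> [a aA | x xW]; first by rewrite /glued ifT // !inE aA !orbT.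
have [xR | xR] := boolP (x \in R).
  exact: leq_trans (subset_leq_card (glued_comp_in F_boundary xR)) Rw.
have xWR : x \in W :\: R by rewrite inE xR xW.
apply: leq_trans (subset_leq_card (glued_comp_out h_sym F_boundary xWR)) _.
by apply: (HF _ _).2; [apply/exists_inP; exists x | exact: comp_refl].
Qed.

End ClusteredColoring.

Section Balls.
Variables (T : finType) (e : rel T).

Fixpoint ball (n : nat) (x : T) : {set T} :=
  if n is n'.+1 then ball n' x :|: nbhd e (ball n' x) else [set x].

Lemma mem_ball n x y :
  y \in ball n x <-> exists p, [/\ path e x p, last x p = y & size p <= n].
Proof.
elim: n y => [|n IHn] y /=.
  rewrite inE; split=> [/eqP->|[p [_ <- pn]]]; first by exists [::].
  by case: p pn.
rewrite inE; split=> [/orP[/IHn[p [px py pn]] | /nbhdP[z /IHn[p [px pz pn]] ezy]]|].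
- by exists p; split=> //; rewrite ltnW.
- by exists (rcons p y); rewrite rcons_path last_rcons size_rcons px pz ezy.
case=> p; case/lastP: p => [|p z] [].
  by move=> _ <- _; apply/orP; left; apply/IHn; exists [::].
rewrite rcons_path last_rcons size_rcons => /andP[px ez] <- pn.
by apply/orP; right; apply/nbhdP; exists (last x p) => //; apply/IHn; exists p.
Qed.

Lemma ball_refl n x : x \in ball n x.
Proof. by apply/mem_ball; exists [::]. Qed.

Lemma ball_mono m n x y : m <= n -> y \in ball m x -> y \in ball n x.
Proof.
by move=> mn /mem_ball[p [px py pm]]; apply/mem_ball; exists p; rewrite (leq_trans pm).
Qed.

Lemma card_ball d n x : (forall u, #|[set v | e u v]| <= d) -> #|ball n x| <= (d + 1) ^ n.
Proof.
move=> deg_le; elim: n => [|n IHn] /=; first by rewrite cards1.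
have [+ _] := leq_card_setU (ball n x) (nbhd e (ball n x)).
by have := card_nbhd (ball n x) deg_le; rewrite expnS; nia.
Qed.

Definition power (n : nat) : rel T := fun x y => y \in ball n x.

Lemma power_path_walk n (r : rel T) x p : subrel r (power n) -> path r x p ->
  exists q, [/\ path e x q, last x q = last x p & size q <= n * size p].
Proof.
move=> r_pow; elim: p x => [|z p IHp] x /=; first by exists [::].
case/andP=> /r_pow/mem_ball[q1 [pq1 lq1 sq1]] /IHp[q2 [pq2 lq2 sq2]].
exists (q1 ++ q2); rewrite cat_path last_cat lq1 pq1 pq2 lq2 size_cat mulnS.
by split=> //; exact: leq_add.
Qed.

Hypothesis e_sym : symmetric e.

Lemma ball_sym n x y : y \in ball n x -> x \in ball n y.
Proof.
case/mem_ball=> p [px <- pn]; apply/mem_ball; exists (rev (belast x p)); split.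
- by rewrite rev_path (eq_path (fun a b => e_sym b a)).
- by case: p {px pn} => //= z p; rewrite rev_cons last_rcons.
- by rewrite size_rev size_belast.
Qed.

Lemma power_sym n : symmetric (power n).
Proof. by move=> x y; apply/idP/idP => /ball_sym. Qed.

End Balls.

Section PowerDecomposition.
Variables (T : finType) (e : rel T) (I : finType) (te : rel I) (bag : I -> {set T}).
Hypotheses (e_sym : symmetric e) (td : tree_decomposition e te bag).
Variable n : nat.

Definition power_bag (i : I) : {set T} := \bigcup_(w in bag i) ball e n w.

Lemma card_power_bag d i : (forall u, #|[set v | e u v]| <= d) ->
  #|power_bag i| <= #|bag i| * (d + 1) ^ n.
Proof. by move=> deg_le; apply: card_bigcup_le => w _; exact: card_ball. Qed.

Lemma mem_power_bag i w u : w \in bag i -> u \in ball e n w -> u \in power_bag i.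
Proof. by move=> wi uw; apply/bigcupP; exists w. Qed.

Let bags_of (u : T) : rel I :=
  [rel a b | [&& te a b, u \in power_bag a & u \in power_bag b]].

Lemma connect_power_bags u x a b :
  x \in ball e n u -> x \in bag a -> x \in bag b -> connect (bags_of u) a b.
Proof.
move=> xu xa xb; have ux := ball_sym e_sym xu; case: td => _ [_ [_ bags_conn]].
apply: connect_sub (bags_conn x a b xa xb) => c c' /and3P[tcc' xc xc'].
by apply: connect1; rewrite /bags_of /= tcc' (mem_power_bag xc ux) (mem_power_bag xc' ux).
Qed.

Lemma power_bags_connect u a0 m x a : u \in bag a0 -> m <= n ->
  x \in ball e m u -> x \in bag a -> connect (bags_of u) a0 a.
Proof.
move=> ua0; elim: m x a => [|m IHm] x a mn /=.
  by rewrite inE => /eqP-> ua; apply: connect_power_bags (ball_refl e n u) ua0 ua.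
rewrite inE => /orP[xm|/nbhdP[y ym eyx]] xa; first exact: IHm (ltnW mn) xm xa.
case: td => _ [_ [edges _]]; have [b /andP[yb xb]] := edges _ _ eyx.
apply: connect_trans (IHm y b (ltnW mn) ym yb) (connect_power_bags _ xb xa).
by apply: ball_mono mn _; rewrite /= inE; apply/orP; right; apply/nbhdP; exists y.
Qed.

Lemma td_power : tree_decomposition (power e n) te power_bag.
Proof.
case: (td) => tree [cover [edges _]]; split=> //; split=> [v|].
  by have [i vi] := cover v; exists i; exact: mem_power_bag vi (ball_refl e n v).
split=> [u v uv|u i j /bigcupP[w1 w1i uw1] /bigcupP[w2 w2j uw2]].
  have [i ui] := cover u; exists i.
  by rewrite (mem_power_bag ui (ball_refl e n u)) (mem_power_bag ui uv).
have [a0 ua0] := cover u.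
have bags_sym : symmetric (bags_of u).
  by move=> a b; rewrite /bags_of /= (tree_sym tree a b) [(u \in _) && _]andbC.
have c1 := power_bags_connect ua0 (leqnn n) (ball_sym e_sym uw1) w1i.
have c2 := power_bags_connect ua0 (leqnn n) (ball_sym e_sym uw2) w2j.
by rewrite (sym_connect_sym bags_sym) in c1; exact: connect_trans c1 c2.
Qed.

End PowerDecomposition.

Lemma comp_col (T : finType) (h : rel T) (col : T -> bool) (S : {set T}) x y :
  y \in comp (mono h col) S x -> col y = col x.
Proof.
move=> yC; have : y \in [set z | col z == col x].
  apply: subsetP yC; apply: comp_closed => [|u v]; rewrite !inE //.
  by move=> /eqP <- /and3P[_ _ /andP[_]]; rewrite eq_sym.
by rewrite inE => /eqP.
Qed.

Lemma comp_short_path (T : finType) (h : rel T) (S : {set T}) x y : y \in comp h S x ->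
  exists p, [/\ path (induced h S) x p, last x p = y & size p < #|comp h S x|].
Proof.
rewrite inE => /connectP[p px ->]; case: (shortenP px) => q qx q_uniq q_sub.
exists q; split=> //; rewrite -ltnS -/(size (x :: q)) -(card_uniqP q_uniq) ltnS.
apply/subset_leq_card/subsetP => z /= zq; rewrite inE; exact: path_connect qx z zq.
Qed.

Section CoverFromColoring.
Variables (T : finType) (e : rel T).
Hypothesis e_sym : symmetric e.
Variables (n c : nat) (col : T -> bool).
Hypothesis cluster_le : forall x, #|comp (mono (power e n) col) setT x| <= c.

Let cluster := comp (mono (power e n) col) setT.
Let cluster_eq := comp_eq (mono_sym col (power_sym e_sym n)).

Definition color_classes (i : 'I_2) : {set {set T}} :=
  [set cluster x | x in [pred x | nat_of_bool (col x) == i]].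

Lemma color_classes_cover x : exists i, exists2 A, A \in color_classes i & x \in A.
Proof.
exists (inord (col x)), (cluster x); last exact: comp_refl.
by apply/imsetP; exists x; rewrite // inE inordK // ltnS leq_b1.
Qed.

Lemma color_classes_disjoint (r : R) (i : 'I_2) : (forall k, Rle (INR k) r -> k <= n) ->
  disjoint_family e r (color_classes i).
Proof.
move=> r_le_n A B /imsetP[x1 /eqP c1 ->] /imsetP[x2 /eqP c2 ->] AB x y xA yB.
move=> [p [px [py pr]]].
have xy : power e n x y by apply/mem_ball; exists p; split=> //; exact: r_le_n.
have yx : y \in cluster x.
  apply: comp_step (comp_refl _ _ x) _.
  rewrite /induced /mono /= !inE xy (comp_col xA) (comp_col yB).
  by apply/eqP; case: (col x1) (col x2) c1 c2 => -[] // <-.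
by move: AB; rewrite /cluster -(cluster_eq xA) -(cluster_eq yB) -(cluster_eq yx) eqxx.
Qed.

Lemma color_classes_bounded (D : R) (i : 'I_2) : Rle (INR (n * c)) D ->
  bounded_family e D (color_classes i).
Proof.
move=> ncD A /imsetP[x1 _ ->] x y xA; rewrite /cluster -(cluster_eq xA) => yA.
have [p [px py p_lt]] := comp_short_path yA.
have sub : subrel (induced (mono (power e n) col) setT) (power e n).
  by move=> u v /and3P[_ _ /andP[]].
have [q [qx qy q_le]] := power_path_walk sub px.
exists q; split=> //; split; first by rewrite qy.
apply: Rle_trans ncD; apply/le_INR/leP; apply: leq_trans q_le _.
by rewrite leq_mul2l (leq_trans (ltnW p_lt)) ?orbT.
Qed.

End CoverFromColoring.

Definition power_degree (Delta : Z) (n : nat) : nat := (Z.to_nat Delta).+1 ^ n.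
Definition power_bag_bound (t Delta : Z) (n : nat) : nat :=
  (Z.to_nat t).+1 * power_degree Delta n.

Lemma power_graph_coloring (T : finType) (e : rel T) (t Delta : Z) (n : nat) :
  simple_graph e -> treewidth_le e t -> maxdeg_le e Delta ->
  exists col : T -> bool, forall x, #|comp (mono (power e n) col) setT x| <=
    cluster_bound (power_bag_bound t Delta n) (power_degree Delta n).
Proof.
move=> [e_sym _] [I [te [bag [td width]]]] maxdeg.
have deg_le x : #|[set y | e x y]| <= Z.to_nat Delta by have := maxdeg x; lia.
have d_gt0 : 0 < power_degree Delta n by rewrite expn_gt0.
have power_deg x : #|[set y | power e n x y]| <= power_degree Delta n.
  have -> : [set y | power e n x y] = ball e n x by apply/setP => y; rewrite inE.
  by have := card_ball n x deg_le; rewrite addn1.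
have bag_le i : #|power_bag e bag n i| <= power_bag_bound t Delta n.
  apply: leq_trans (card_power_bag bag n i deg_le) _; rewrite addn1 leq_mul2r.
  by have := width i; rewrite orbC; lia.
have K_gt0 : 0 < power_bag_bound t Delta n by rewrite muln_gt0 d_gt0.
have [|col [_ cluster_le]] := clustered_coloring (power_sym e_sym n) (td_power e_sym td n)
  K_gt0 bag_le d_gt0 power_deg true (sub0set setT) _; first by rewrite cards0.
by exists col => x; exact: cluster_le.
Qed.

Definition radius (r : R) : nat := Z.to_nat (up r).

Lemma radius_ge (r : R) k : Rle (INR k) r -> k <= radius r.
Proof.
move=> kr; have [ur _] := archimed r.
have : Rlt (IZR (Z.of_nat k)) (IZR (up r)) by rewrite -INR_IZR_INZ; lra.
by move/lt_IZR; rewrite /radius; lia.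
Qed.

Definition control (t Delta : Z) (r : R) : R :=
  Rplus (INR (radius r * cluster_bound (power_bag_bound t Delta (radius r))
                                       (power_degree Delta (radius r)))) 1.

Theorem theorem5p5 (t Delta : Z) :
  asdim_le (fun (T : finType) (e : rel T) =>
              simple_graph e /\ treewidth_le e t /\ maxdeg_le e Delta) 1.
Proof.
exists (control t Delta); split=> [r _ | T e [e_simple [tw maxdeg]] r _].
  by rewrite /control; have := pos_INR (radius r * cluster_bound
    (power_bag_bound t Delta (radius r)) (power_degree Delta (radius r))); lra.
have e_sym : symmetric e by case: e_simple.
have [col cluster_le] := power_graph_coloring (radius r) e_simple tw maxdeg.
exists (color_classes e (radius r) col); split; first exact: color_classes_cover.
split=> i; first by apply: (color_classes_disjoint e_sym) => k; exact: radius_ge.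
by apply: (color_classes_bounded e_sym cluster_le); rewrite /control; lra.
Qed.
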